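(* Let $p$ be a prime and $K$ a finite extension of $\mathbb{Q}_p$. Suppose that $B$ is a nonempty finite set of elements of $K$ such that $|\beta|_p<1$ for each $\beta\in B$. For each $\beta\in B$ let $c_\beta:\mathbb{Z}_p\to K$ be a continuous function, and for $n\in\mathbb N$ define $s(n)=\sum_{\beta\in B}c_\beta(n)\beta^n$. If there is a twisted interpolation of $s(n)_{n\ge0}$ to $\mathbb{Z}_p$, then $s(n)=0$ for all $n\ge 0$.
   Context: $\mathbb N=\{0,1,2,\dots\}$; $|\cdot|_p$ is the unique absolute value on $K$ extending the $p$-adic one. Let $q\ge1$ be a power of $p$. A twisted interpolation of $s(n)_{n\ge0}$ to $\mathbb{Z}_p$ is a family $\{(s_j,A_j):j\in J\}$ where $\mathbb N=\bigcup_{j\in J}A_j$ is a finite partition with each $A_j$ dense in $r+q\mathbb{Z}_p$ for some $0\le r\le q-1$, $L$ is a finite extension of $\mathbb{Q}_p$, each $s_j:\mathbb{Z}_p\to L$ is continuous, and $s(n)=s_j(n)$ for all $n\in A_j$ and $j\in J$. *)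

From HB Require Import structures.
From mathcomp Require Import all_boot all_order all_algebra.
From mathcomp Require Import reals.
Set Implicit Arguments. Unset Strict Implicit. Unset Printing Implicit Defensive.
Import Order.TTheory GRing.Theory Num.Theory.
Local Open Scope ring_scope.

(* x k is the residue of x modulo p^k; compatibility: x (k+1) mod p^k = x k. *)
Definition Zpadic (p : nat) :=
  { x : nat -> nat | forall k, (x k.+1 %% p ^ k = x k)%N /\ (x k %% p ^ k = x k)%N }.

Definition zp_res (p : nat) (x : Zpadic p) (k : nat) : nat := proj1_sig x k.

Lemma zp_of_nat_proof (p n : nat) :
  forall k, ((n %% p ^ k.+1) %% p ^ k = n %% p ^ k)%N /\ ((n %% p ^ k) %% p ^ k = n %% p ^ k)%N.
Proof.
move=> k; split; last by rewrite modn_mod.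
by rewrite modn_dvdm // expnS dvdn_mull.
Qed.

Definition zp_of_nat (p n : nat) : Zpadic p :=
  exist _ (fun k => n %% p ^ k)%N (zp_of_nat_proof p n).

Definition zp_coset (p e r : nat) (x : Zpadic p) : Prop := zp_res x e = r.

(* A subset A of N (viewed in Z_p) is dense in r + p^e Z_p:
   A is contained in r + p^e Z_p, and every point of r + p^e Z_p is a limit of points of A,
   i.e. every p-adic ball  {y | y = x mod p^k}  around such a point meets A. *)
Definition dense_in_coset (p : nat) (A : pred nat) (e r : nat) : Prop :=
  (forall n, A n -> zp_coset e r (zp_of_nat p n)) /\
  (forall x : Zpadic p, zp_coset e r x ->
     forall k, exists n, A n /\ zp_res (zp_of_nat p n) k = zp_res x k).

Section Valued.
Variables (R : realType) (K : fieldType) (v : K -> R).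

(* v is a non-archimedean absolute value extending the p-adic one on Q (|p| = 1/p) *)
Definition padic_abs (p : nat) : Prop :=
  [/\ forall x, 0 <= v x,
      forall x, v x = 0 <-> x = 0,
      forall x y, v (x * y) = v x * v y,
      forall x y, v (x + y) <= Num.max (v x) (v y)
    & v (p%:R) = (p%:R)^-1].

Definition v_cauchy (u : nat -> K) : Prop :=
  forall eps : R, 0 < eps -> exists N, forall m n, (N <= m)%N -> (N <= n)%N -> v (u m - u n) < eps.

Definition v_converges (u : nat -> K) (l : K) : Prop :=
  forall eps : R, 0 < eps -> exists N, forall n, (N <= n)%N -> v (u n - l) < eps.

Definition v_complete : Prop :=
  forall u, v_cauchy u -> exists l, v_converges u l.

(* the closure of Q in K; when K is complete this is a copy of Q_p *)
Definition in_Qp (x : K) : Prop :=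
  forall eps : R, 0 < eps -> exists a : rat, v (ratr a - x) < eps.

(* K (with v) is a finite extension of Q_p: v extends |.|_p, K is complete, and K is
   spanned by finitely many elements over the closure of Q in K (= Q_p). *)
Definition finite_ext_Qp (p : nat) : Prop :=
  [/\ padic_abs p, v_complete &
      exists e : seq K, forall x : K, exists a : seq K,
        [/\ size a = size e, forall i, in_Qp a`_i &
            x = \sum_(i < size e) a`_i * e`_i]].

Definition zp_continuous (p : nat) (f : Zpadic p -> K) : Prop :=
  forall (x : Zpadic p) (eps : R), 0 < eps ->
    exists k, forall y : Zpadic p, zp_res y k = zp_res x k -> v (f y - f x) < eps.

End Valued.

(* A twisted interpolation of s : N -> K to Z_p.  q = p^e; the finite partition is indexed
   by a finType J; the target field L is a finite extension of Q_p into which K embeds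
   compatibly with the absolute values (so that s(n) = s_j(n) makes sense). *)
Definition twisted_interpolation (p : nat) (R : realType) (K : fieldType) (vK : K -> R)
    (s : nat -> K) : Prop :=
  exists (e : nat) (J : finType) (A : J -> pred nat) (r : J -> nat)
         (L : fieldType) (vL : L -> R) (iota : {rmorphism K -> L}) (sj : J -> Zpadic p -> L),
    [/\ finite_ext_Qp vL p /\ (forall x, vL (iota x) = vK x),
        forall n, exists! j, A j n,
        forall j, (r j < p ^ e)%N /\ dense_in_coset p (A j) e (r j),
        forall j, zp_continuous vL (sj j)
      & forall j n, A j n -> sj j (zp_of_nat p n) = iota (s n)].

From HB Require Import structures.
From mathcomp Require Import all_boot all_order all_algebra.
From mathcomp Require Import reals topology normedtype sequences.
From mathcomp Require Import zify lra.
Import Order.TTheory GRing.Theory Num.Theory numFieldNormedType.Exports.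
Set Implicit Arguments. Unset Strict Implicit.
Local Open Scope ring_scope.

(* Fix n0 and eps > 0.  Every term c_b(m) b^m is small once m is large and
   p-adically close to n0, because c_b is bounded near n0 and |b| < 1; so |s(m)| < eps
   for such m.  Density of the piece A_j containing n0 provides such an m in A_j
   arbitrarily close to n0, and continuity of s_j at n0 then gives
   |s(n0)| = |s_j(n0)| <= max(|s_j(n0) - s_j(m)|, |s(m)|) < eps. *)

Definition ultrametric_abs (R : realDomainType) (K : fieldType) (v : K -> R) : Prop :=
  [/\ forall x, 0 <= v x,
      forall x, v x = 0 <-> x = 0,
      forall x y, v (x * y) = v x * v y
    & forall x y, v (x + y) <= Num.max (v x) (v y)].

Lemma padic_abs_ultrametric (R : realType) (K : fieldType) (v : K -> R) (p : nat) :
  padic_abs v p -> ultrametric_abs v.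
Proof. by case. Qed.

Section UltrametricAbs.
Variables (R : realDomainType) (K : fieldType) (v : K -> R).
Hypothesis vabs : ultrametric_abs v.

Lemma abs_ge0 x : 0 <= v x. Proof. by case: vabs. Qed.
Lemma abs_eq0 x : v x = 0 <-> x = 0. Proof. by case: vabs. Qed.
Lemma absM x y : v (x * y) = v x * v y. Proof. by case: vabs. Qed.
Lemma absD_le_max x y : v (x + y) <= Num.max (v x) (v y). Proof. by case: vabs. Qed.

Lemma abs1 : v 1 = 1.
Proof.
have v1_neq0 : v 1 != 0 by apply/eqP => /abs_eq0/eqP; rewrite oner_eq0.
by apply: (mulfI v1_neq0); rewrite -absM !mulr1.
Qed.

Lemma absN x : v (- x) = v x.
Proof.
have vN1_sq : v (-1) * v (-1) = 1 by rewrite -absM mulrNN mulr1 abs1.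
have vN1_ge0 := abs_ge0 (-1).
have vN1 : v (-1) = 1 by nra.
by rewrite -mulN1r absM vN1 mul1r.
Qed.

Lemma absX x n : v (x ^+ n) = v x ^+ n.
Proof. by elim: n => [|n IHn]; rewrite ?expr0 ?abs1 // !exprS absM IHn. Qed.

Lemma abs_le_max_sub x y : v x <= Num.max (v (x - y)) (v y).
Proof. by have := absD_le_max (x - y) y; rewrite subrK. Qed.

Lemma abs_sum_lt (I : eqType) (s : seq I) (F : I -> K) (eps : R) : 0 < eps ->
  (forall i, i \in s -> v (F i) < eps) -> v (\sum_(i <- s) F i) < eps.
Proof.
move=> eps_gt0; elim: s => [|i s IHs] Fs_lt.
  by rewrite big_nil (abs_eq0 0).2.
rewrite big_cons (le_lt_trans (absD_le_max _ _)) // gt_max Fs_lt ?mem_head //=.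
by apply: IHs => i' si'; rewrite Fs_lt // in_cons si' orbT.
Qed.

Lemma eq0_of_abs_lt x : (forall eps, 0 < eps -> v x < eps) -> x = 0.
Proof.
move=> x_small; apply/abs_eq0/eqP; rewrite eq_le abs_ge0 andbT leNgt.
by apply/negP => /x_small; rewrite ltxx.
Qed.

End UltrametricAbs.

Lemma expr_lt_eventually (R : realType) (a eps : R) : 0 <= a -> a < 1 -> 0 < eps ->
  exists N : nat, forall n, (N <= n)%N -> a ^+ n < eps.
Proof.
move=> a_ge0 a_lt1 eps_gt0.
have norm_a_lt1 : `|a| < 1 by rewrite ger0_norm.
have [N _ aN_small] := (cvgr0Pnorm_lt _).1 (cvg_expr norm_a_lt1) _ eps_gt0.
by exists N => n /aN_small; rewrite ger0_norm // exprn_ge0.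
Qed.

Lemma eqn_mod_expn_leq (p N M m n : nat) : (N <= M)%N ->
  m = n %[mod p ^ M] -> m = n %[mod p ^ N].
Proof.
move=> NM mn; have dvd_pNM : (p ^ N %| p ^ M)%N by rewrite dvdn_exp2l.
by rewrite -(modn_dvdm m dvd_pNM) mn modn_dvdm.
Qed.

Section VanishingNear.
Variables (R : realType) (K : fieldType) (v : K -> R) (p : nat).
Hypothesis vabs : ultrametric_abs v.

(* [f m] tends to 0 as m tends to n0 in Z_p and to infinity in N simultaneously. *)
Definition vanishes_near (f : nat -> K) (n0 : nat) : Prop :=
  forall eps, 0 < eps ->
    exists N, forall m, (N <= m)%N -> m = n0 %[mod p ^ N] -> v (f m) < eps.

Lemma vanishes_near_sum (I : eqType) (s : seq I) (F : I -> nat -> K) n0 :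
  (forall i, i \in s -> vanishes_near (F i) n0) ->
  vanishes_near (fun m => \sum_(i <- s) F i m) n0.
Proof.
move=> Fs_van eps eps_gt0.
have [N FN_small] : exists N, forall i m, i \in s ->
    (N <= m)%N -> m = n0 %[mod p ^ N] -> v (F i m) < eps.
  elim: s Fs_van => [|i s IHs] Fs_van; first by exists 0%N.
  have [Ni Fi_small] := Fs_van i (mem_head _ _) eps eps_gt0.
  have [Ns Fs_small] : exists N, forall i' m, i' \in s ->
      (N <= m)%N -> m = n0 %[mod p ^ N] -> v (F i' m) < eps.
    by apply: IHs => i' si'; apply: Fs_van; rewrite in_cons si' orbT.
  exists (maxn Ni Ns) => i' m; rewrite in_cons geq_max => + /andP[NIm Nsm] mn0.
  case/predU1P => [->|si']; first exact: Fi_small NIm (eqn_mod_expn_leq (leq_maxl _ _) mn0).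
  exact: Fs_small si' Nsm (eqn_mod_expn_leq (leq_maxr _ _) mn0).
by exists N => m Nm mn0; apply: abs_sum_lt => // i si; apply: FN_small.
Qed.

Lemma vanishes_near_geometric (c : Zpadic p -> K) (b : K) n0 :
  zp_continuous v c -> v b < 1 ->
  vanishes_near (fun m => c (zp_of_nat p m) * b ^+ m) n0.
Proof.
move=> c_cont b_lt1 eps eps_gt0.
pose M := Num.max 1 (v (c (zp_of_nat p n0))).
have M_gt0 : 0 < M by rewrite lt_max ltr01.
have [k c_near] := c_cont (zp_of_nat p n0) 1 ltr01.
have [N bN_small] := expr_lt_eventually (abs_ge0 vabs b) b_lt1 (divr_gt0 eps_gt0 M_gt0).
exists (maxn k N) => m; rewrite geq_max => /andP[_ Nm] mn0.
have cm_le : v (c (zp_of_nat p m)) <= M.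
  apply: le_trans (abs_le_max_sub vabs _ (c (zp_of_nat p n0))) _.
  have := c_near (zp_of_nat p m) (eqn_mod_expn_leq (leq_maxl k N) mn0).
  by rewrite /M ge_max !le_max lexx orbT => /ltW ->.
rewrite absM // absX //.
apply: le_lt_trans (ler_wpM2r (exprn_ge0 _ (abs_ge0 vabs b)) cm_le) _.
by rewrite -ltr_pdivlMl // mulrC bN_small.
Qed.

End VanishingNear.

Lemma dense_in_coset_large (p : nat) (A : pred nat) (e r n0 k : nat) : (1 < p)%N ->
  dense_in_coset p A e r -> A n0 ->
  exists m, [/\ A m, (k <= m)%N & m = n0 %[mod p ^ k]].
Proof.
move=> p_gt1 [A_coset A_dense] An0.
pose K := (k + e + n0)%N.
have [k_le_K e_le_K] : (k <= K)%N /\ (e <= K)%N by rewrite /K; lia.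
have K_lt_pK : (K < p ^ K)%N := ltn_expl K p_gt1.
have n0_lt_pK : (n0 < p ^ K)%N by apply: leq_ltn_trans K_lt_pK; rewrite leq_addl.
have mod_pK_shift j : (j <= K)%N -> n0 + p ^ K = n0 %[mod p ^ j].
  by move=> jK; rewrite -modnDmr (eqP (dvdn_exp2l p jK)) addn0.
have x_coset : zp_coset e r (zp_of_nat p (n0 + p ^ K)).
  by rewrite /zp_coset /= mod_pK_shift //; exact: A_coset.
have [m [Am m_near]] := A_dense _ x_coset K.+1.
have m_mod : (m %% p ^ K.+1 = n0 + p ^ K)%N.
  rewrite [LHS]m_near /= modn_small // expnS.
  have : (2 * p ^ K <= p * p ^ K)%N by rewrite leq_mul2r p_gt1 orbT.
  lia.
exists m; split => //.
- by apply: leq_trans (leq_mod m (p ^ K.+1)); rewrite m_mod; lia.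
- by rewrite (eqn_mod_expn_leq _ m_near) ?mod_pK_shift //; lia.
Qed.

Theorem theorem3p7 (p : nat) (R : realType) (K : fieldType) (vK : K -> R)
    (B : seq K) (c : K -> Zpadic p -> K) :
  prime p ->
  finite_ext_Qp vK p ->
  B != [::] -> uniq B ->
  (forall b, b \in B -> vK b < 1) ->
  (forall b, b \in B -> zp_continuous vK (c b)) ->
  twisted_interpolation p vK (fun n => \sum_(b <- B) c b (zp_of_nat p n) * b ^+ n) ->
  forall n : nat, \sum_(b <- B) c b (zp_of_nat p n) * b ^+ n = 0.
Proof.
move=> p_prime [/padic_abs_ultrametric vKabs _ _] _ _ B_small c_cont.
case=> e [J [A [r [L [vL [iota [sj]]]]]]].
case=> [[[/padic_abs_ultrametric vLabs _ _] iota_isom] A_partition A_dense sj_cont sj_interp] n0.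
have s_van : vanishes_near vK p (fun m => \sum_(b <- B) c b (zp_of_nat p m) * b ^+ m) n0.
  apply: (vanishes_near_sum vKabs) => b bB.
  exact: (vanishes_near_geometric vKabs n0 (c_cont b bB) (B_small b bB)).
apply: (eq0_of_abs_lt vKabs) => eps eps_gt0.
have [j [Aj _]] := A_partition n0.
have [k sj_near] := sj_cont j (zp_of_nat p n0) eps eps_gt0.
have [N s_small] := s_van eps eps_gt0.
have [m [Am Nm mn0]] :=
  dense_in_coset_large (maxn k N) (prime_gt1 p_prime) (A_dense j).2 Aj.
rewrite -iota_isom -(sj_interp j n0 Aj).
apply: le_lt_trans (abs_le_max_sub vLabs _ (sj j (zp_of_nat p m))) _.
rewrite gt_max -opprB absN // sj_near /=; last exact: eqn_mod_expn_leq (leq_maxl k N) mn0.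
rewrite (sj_interp j m Am) iota_isom.
apply: s_small; first exact: leq_trans (leq_maxr k N) Nm.
exact: eqn_mod_expn_leq (leq_maxr k N) mn0.
Qed.
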